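(* The function $h(s) = s\,\dfrac{\theta_o'(s)}{\theta_o(s)}$, $s>0$, is strictly decreasing on $[1/4,\infty)$, and satisfies $h(s) \ge \dfrac{\theta_o'(1)}{\theta_o(1)}$ for all $0 < s \le 1/4$.
   Context: For $s>0$, $\theta_o(s) = \sum_{k\in\mathbb{Z}} e^{-\pi (2k+1)^2 s}$. *)

From Stdlib Require Import Reals ClassicalEpsilon.
Open Scope R_scope.

(* Symmetric partial sum  sum_{k=-N}^{N} exp(-pi (2k+1)^2 s),
   indexed by n = 0..2N with k = n - N. *)
Definition theta_o_partial (s : R) (N : nat) : R :=
  sum_f_R0 (fun n => exp (- PI * (2 * (INR n - INR N) + 1) ^ 2 * s)) (2 * N).

(* theta_o(s) = sum_{k in Z} exp(-pi (2k+1)^2 s): the limit of the symmetric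
   partial sums (the series converges absolutely for s > 0). *)
Definition theta_o (s : R) : R :=
  epsilon (inhabits 0) (fun l => Un_cv (theta_o_partial s) l).

(* Put q = exp (- PI s) and T_k(s) = sum_(j>=0) (2j+1)^(2k) q^((2j+1)^2).  Folding the
   index k <-> -1-k gives theta_o = 2 T_0, and T_k is a power series in q (lacunary,
   supported on the odd squares), so it may be differentiated termwise:
   T_k' = - PI T_(k+1).  Hence h = - PI s T_1 / T_0 and
     h' = - PI (T_1 T_0 - PI s (T_2 T_0 - T_1^2)) / T_0^2.
   For s >= 1/4 each T_k, k <= 2, is its first term q up to a relative error of order
   9^k q^8 with q^8 <= exp (-2 PI) < 1/300, and the numerator is positive.
   For s <= 1/4 we show s T_1 <= T_0: each term s m q^m is at most 1/(2 PI) times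
   exp (- PI s m / 4), a term of the series at s/4, whose terms of index 2i+1 and 2i+2 are
   both at most q^((2i+1)^2).  So h s >= - PI >= - PI T_1(1) / T_0(1) = h 1. *)

From Coquelicot Require Import Coquelicot.
From Stdlib Require Import Reals Lia Lra Psatz ClassicalEpsilon.
Open Scope R_scope.

Lemma exp_le a b : a <= b -> exp a <= exp b.
Proof. intros [Hlt | ->]; [left; apply exp_increasing, Hlt|right; reflexivity]. Qed.

Lemma exp_pow x n : exp x ^ n = exp (INR n * x).
Proof.
  induction n as [|n IH]; [simpl; rewrite Rmult_0_l, exp_0; reflexivity|].
  rewrite S_INR; simpl pow; rewrite IH, <- exp_plus; f_equal; ring.
Qed.

Lemma mul_exp_neg_le t : t * exp (- t) <= exp (- 1).
Proof.
  pose proof (exp_ineq1_le (t - 1)); pose proof (exp_pos (- t)).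
  replace (exp (- 1)) with (exp (t - 1) * exp (- t)) by (rewrite <- exp_plus; f_equal; ring).
  nra.
Qed.

Lemma PI_gt_3 : 3 < PI.
Proof. pose proof PI2_3_2; lra. Qed.

Lemma exp_1_ge : 8 / 3 <= exp 1.
Proof. pose proof (exp_ge_taylor 1 3 ltac:(lra)) as H; simpl in H; lra. Qed.

Lemma exp_m1_bounds : 1 / 3 <= exp (- 1) <= 3 / 8.
Proof.
  assert (Hinv : exp (- 1) * exp 1 = 1)
    by (rewrite <- exp_plus; replace (- 1 + 1) with 0 by ring; apply exp_0).
  pose proof exp_le_3; pose proof exp_1_ge; pose proof (exp_pos (- 1)); split; nra.
Qed.

Lemma exp_m2PI_le : exp (- (2 * PI)) <= 1 / 300.
Proof.
  pose proof PI_gt_3; pose proof (exp_pos (- 6)).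
  assert (Hinv : exp (- 6) * exp 1 ^ 6 = 1)
    by (rewrite exp_pow, <- exp_plus; replace (- 6 + INR 6 * 1) with 0 by (simpl; ring);
        apply exp_0).
  assert ((8 / 3) ^ 6 <= exp 1 ^ 6) by (apply pow_incr; pose proof exp_1_ge; lra).
  assert (exp (- (2 * PI)) <= exp (- 6)) by (apply exp_le; lra).
  nra.
Qed.

Lemma Un_cv_const c : Un_cv (fun _ => c) c.
Proof.
  intros eps Heps; exists O; intros; unfold R_dist; rewrite Rminus_diag, Rabs_R0; exact Heps.
Qed.

Lemma Un_cv_le_const (u : nat -> R) l c : Un_cv u l -> (forall n, u n <= c) -> l <= c.
Proof. intros Hu Hc; eapply Rle_cv_lim; [exact Hc|exact Hu|apply Un_cv_const]. Qed.

Lemma sum_f_R0_growing (f : nat -> R) : (forall n, 0 <= f n) -> Un_growing (sum_f_R0 f).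
Proof. intros Hf n; rewrite tech5; specialize (Hf (S n)); lra. Qed.

Lemma sum_f_R0_rev (f : nat -> R) n :
  sum_f_R0 f n = sum_f_R0 (fun i => f (n - i)%nat) n.
Proof.
  induction n as [|n IH]; [reflexivity|].
  rewrite tech5, IH, (decomp_sum (fun i => f (S n - i)%nat) (S n)) by lia.
  simpl pred; rewrite Nat.sub_0_r; simpl (fun i => f (S n - S i)%nat); ring.
Qed.

Lemma sum_f_R0_ratio_le (b : nat -> R) r J :
  0 <= r < 1 -> (forall i, 0 <= b i) -> (forall i, b (S i) <= r * b i) ->
  (1 - r) * sum_f_R0 b J <= b O.
Proof.
  intros Hr Hb Hratio.
  assert (Hinv : forall K, (1 - r) * sum_f_R0 b K + r * b K <= b O).
  { induction K as [|K IH]; simpl; [lra|]; specialize (Hratio K); nra. }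
  specialize (Hinv J); specialize (Hb J); nra.
Qed.

(** * The theta moments as lacunary power series *)

Definition odd_sq (j : nat) : nat := (2 * j + 1) * (2 * j + 1).

Lemma INR_odd_sq j : INR (odd_sq j) = (2 * INR j + 1) ^ 2.
Proof. unfold odd_sq; rewrite mult_INR, plus_INR, mult_INR; simpl; ring. Qed.

Lemma exp_pow_odd_sq s j :
  exp (- PI * s) ^ odd_sq j = exp (- PI * (2 * INR j + 1) ^ 2 * s).
Proof. rewrite exp_pow, INR_odd_sq; f_equal; ring. Qed.

Definition odd_sq_ind (n : nat) : R :=
  if (Nat.odd n && Nat.eqb (Nat.sqrt n * Nat.sqrt n) n)%bool then 1 else 0.

Lemma odd_sq_ind_odd_sq j : odd_sq_ind (odd_sq j) = 1.
Proof.
  unfold odd_sq_ind, odd_sq; rewrite Nat.sqrt_square, Nat.eqb_refl.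
  replace (Nat.odd _) with true; [reflexivity|].
  symmetry; apply Nat.odd_spec; exists (2 * j * j + 2 * j)%nat; lia.
Qed.

Lemma odd_sq_ind_gap j n :
  (odd_sq j < n < odd_sq (S j))%nat -> odd_sq_ind n = 0.
Proof.
  unfold odd_sq, odd_sq_ind; intros Hn.
  destruct (Nat.odd n) eqn:Hodd; [|reflexivity].
  destruct (Nat.eqb_spec (Nat.sqrt n * Nat.sqrt n) n) as [Hsq|]; [|reflexivity].
  exfalso; apply Nat.odd_spec in Hodd; destruct Hodd as [k Hk].
  set (r := Nat.sqrt n) in *.
  assert (2 * j + 1 < r < 2 * j + 3)%nat by nia.
  assert (r = 2 * j + 2)%nat by lia; subst r; nia.
Qed.

Lemma odd_sq_ind_bounds n : 0 <= odd_sq_ind n <= 1.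
Proof. unfold odd_sq_ind; destruct (_ && _)%bool; lra. Qed.

Lemma sum_odd_sq_ind (F : nat -> R) J :
  sum_f_R0 (fun n => odd_sq_ind n * F n) (odd_sq J) =
  sum_f_R0 (fun j => F (odd_sq j)) J.
Proof.
  induction J as [|J IH].
  { change (odd_sq_ind 0 * F 0%nat + odd_sq_ind 1 * F 1%nat = F 1%nat).
    replace (odd_sq_ind 0) with 0 by reflexivity.
    replace (odd_sq_ind 1) with 1 by reflexivity; ring. }
  rewrite (tech2 _ (odd_sq J) (odd_sq (S J))) by (unfold odd_sq; nia).
  rewrite IH, tech5; f_equal.
  replace (odd_sq (S J) - S (odd_sq J))%nat with (S (8 * J + 6)) by (unfold odd_sq; nia).
  rewrite tech5, sum_eq_R0.
  - replace (S (odd_sq J) + S (8 * J + 6))%nat with (odd_sq (S J)) by (unfold odd_sq; nia).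
    rewrite odd_sq_ind_odd_sq; ring.
  - intros i Hi; rewrite (odd_sq_ind_gap J); [ring|unfold odd_sq in *; nia].
Qed.

Definition theta_coef (k n : nat) : R := INR n ^ k * odd_sq_ind n.

Lemma theta_coef_derive k n :
  PS_incr_1 (PS_derive (theta_coef k)) n = theta_coef (S k) n.
Proof.
  destruct n as [|n]; unfold theta_coef.
  - unfold odd_sq_ind; simpl; unfold zero; simpl; ring.
  - change (PS_derive (theta_coef k) n = INR (S n) * INR (S n) ^ k * odd_sq_ind (S n)).
    unfold PS_derive, theta_coef; ring.
Qed.

Lemma CV_radius_theta_coef k : Rbar_le 1 (CV_radius (theta_coef k)).
Proof.
  induction k as [|k IH].
  - apply CV_radius_bounded; exists 1; intros n.
    unfold theta_coef; rewrite pow1, !Rmult_1_r, pow_O, Rmult_1_l.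
    destruct (odd_sq_ind_bounds n); rewrite Rabs_pos_eq; lra.
  - rewrite <- (CV_radius_ext _ _ (theta_coef_derive k)).
    rewrite CV_radius_incr_1, CV_radius_derive; exact IH.
Qed.

Lemma theta_coef_inside k x :
  0 < x < 1 -> Rbar_lt (Rabs x) (CV_radius (theta_coef k)).
Proof.
  intros Hx; eapply Rbar_lt_le_trans; [|apply CV_radius_theta_coef].
  simpl; rewrite Rabs_pos_eq; lra.
Qed.

(* [theta_mom k] is T_k. *)
Definition theta_mom (k : nat) (s : R) : R := PSeries (theta_coef k) (exp (- PI * s)).

Lemma exp_mPI_bounds s : 0 < s -> 0 < exp (- PI * s) < 1.
Proof.
  intros Hs; split; [apply exp_pos|].
  rewrite <- exp_0; apply exp_increasing; generalize PI_RGT_0; nra.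
Qed.

Lemma is_derive_theta_mom k s :
  0 < s -> is_derive (theta_mom k) s (- PI * theta_mom (S k) s).
Proof.
  intros Hs; unfold theta_mom; set (x := exp (- PI * s)).
  assert (Hx : 0 < x < 1) by (apply exp_mPI_bounds; exact Hs).
  assert (Hexp : is_derive (fun u => exp (- PI * u)) s (- PI * x))
    by (unfold x; auto_derive; auto; ring).
  pose proof (is_derive_PSeries _ _ (theta_coef_inside k x Hx)) as HP.
  replace (- PI * PSeries (theta_coef (S k)) x)
    with (scal (- PI * x) (PSeries (PS_derive (theta_coef k)) x)).
  - exact (is_derive_comp (PSeries (theta_coef k)) (fun u => exp (- PI * u)) s _ _ HP Hexp).
  - rewrite <- (PSeries_ext _ _ x (theta_coef_derive k)), PSeries_incr_1.
    unfold scal; simpl; unfold mult; simpl; ring.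
Qed.

Definition odd_sq_sum (k : nat) (x : R) (J : nat) : R :=
  sum_f_R0 (fun j => INR (odd_sq j) ^ k * x ^ odd_sq j) J.

Lemma odd_sq_sum_cv k s :
  0 < s -> Un_cv (odd_sq_sum k (exp (- PI * s))) (theta_mom k s).
Proof.
  intros Hs; unfold theta_mom; set (x := exp (- PI * s)).
  assert (Hx : 0 < x < 1) by (apply exp_mPI_bounds; exact Hs).
  pose proof (PSeries_correct _ _ (CV_radius_inside _ _ (theta_coef_inside k x Hx))) as H.
  apply is_pseries_R, is_series_Reals in H.
  intros eps Heps; destruct (H eps Heps) as [N HN]; exists N; intros J HJ.
  unfold odd_sq_sum; rewrite <- (sum_odd_sq_ind (fun n => INR n ^ k * x ^ n)).
  rewrite (sum_eq _ (fun n => theta_coef k n * x ^ n)) by (intros; unfold theta_coef; ring).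
  apply HN; unfold odd_sq; nia.
Qed.

(** * [theta_o = 2 T_0] and its derivative *)

(* The symmetric sum over [-N-1 <= k <= N+1] folded at [k = -1/2]. *)
Lemma theta_o_partial_S s N :
  theta_o_partial s (S N) =
  odd_sq_sum 0 (exp (- PI * s)) (S N) + odd_sq_sum 0 (exp (- PI * s)) N.
Proof.
  unfold theta_o_partial, odd_sq_sum.
  rewrite (tech2 _ N (2 * S N)), sum_f_R0_rev, Rplus_comm by lia; f_equal.
  - replace (2 * S N - S N)%nat with (S N) by lia.
    apply sum_eq; intros i _; rewrite pow_O, Rmult_1_l, exp_pow_odd_sq, plus_INR.
    f_equal; ring.
  - apply sum_eq; intros i Hi; rewrite pow_O, Rmult_1_l, exp_pow_odd_sq.
    rewrite minus_INR, S_INR by lia; f_equal; ring.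
Qed.

Lemma theta_o_eq s : 0 < s -> theta_o s = 2 * theta_mom 0 s.
Proof.
  intros Hs.
  assert (Hcv : Un_cv (theta_o_partial s) (2 * theta_mom 0 s)).
  { pose proof (odd_sq_sum_cv 0 s Hs) as H0.
    apply (CV_shift _ 1); intros eps Heps.
    destruct (CV_plus _ _ _ _ (CV_shift' _ 1 _ H0) H0 eps Heps) as [N HN].
    exists N; intros n Hn; specialize (HN n Hn); simpl in HN.
    rewrite Nat.add_1_r in *; rewrite theta_o_partial_S.
    replace (2 * theta_mom 0 s) with (theta_mom 0 s + theta_mom 0 s) by ring.
    exact HN. }
  apply (UL_sequence (theta_o_partial s)); [|exact Hcv].
  apply (epsilon_spec (inhabits 0) (fun l => Un_cv (theta_o_partial s) l)).
  exists (2 * theta_mom 0 s); exact Hcv.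
Qed.

Lemma theta_o_derive s :
  0 < s -> derivable_pt_lim theta_o s (-2 * PI * theta_mom 1 s).
Proof.
  intros Hs; apply is_derive_Reals.
  apply (is_derive_ext_loc (fun t => 2 * theta_mom 0 t)).
  - exists (mkposreal s Hs); intros t Ht; change (Rabs (t - s) < s) in Ht.
    apply Rabs_def2 in Ht; symmetry; apply theta_o_eq; lra.
  - replace (-2 * PI * theta_mom 1 s) with (scal 2 (- PI * theta_mom 1 s))
      by (unfold scal; simpl; unfold mult; simpl; ring).
    apply is_derive_scal, is_derive_theta_mom, Hs.
Qed.

Lemma odd_sq_term_nonneg k x j : 0 <= x -> 0 <= INR (odd_sq j) ^ k * x ^ odd_sq j.
Proof. intros; apply Rmult_le_pos; apply pow_le; [apply pos_INR|assumption]. Qed.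

Lemma odd_sq_sum_growing k x : 0 <= x -> Un_growing (odd_sq_sum k x).
Proof. intros Hx; apply sum_f_R0_growing; intros; apply odd_sq_term_nonneg, Hx. Qed.

Lemma odd_sq_sum_0 k x : odd_sq_sum k x 0 = x.
Proof. unfold odd_sq_sum, odd_sq; simpl; rewrite pow1; ring. Qed.

Lemma odd_sq_ratio j : INR (odd_sq (S (S j))) <= 25 / 9 * INR (odd_sq (S j)).
Proof. rewrite !INR_odd_sq, !S_INR; pose proof (pos_INR j); nra. Qed.

Lemma pow_odd_sq_ratio x j :
  0 <= x <= 1 -> x ^ odd_sq (S (S j)) <= x ^ 16 * x ^ odd_sq (S j).
Proof.
  intros Hx.
  replace (odd_sq (S (S j))) with (odd_sq (S j) + 16 + 8 * j)%nat by (unfold odd_sq; lia).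
  rewrite !pow_add.
  assert (x ^ (8 * j) <= 1) by (rewrite <- (pow1 (8 * j)); apply pow_incr; lra).
  assert (0 <= x ^ odd_sq (S j) * x ^ 16) by (apply Rmult_le_pos; apply pow_le; lra).
  nra.
Qed.

(* Beyond its first term the series is dominated by a geometric one of ratio
   [(25/9)^k x^16], starting at the second term [9^k x^9]. *)
Lemma odd_sq_sum_le k x J :
  0 < x < 1 -> (25 / 9) ^ k * x ^ 16 <= 1 / 2 ->
  odd_sq_sum k x J <= x + 2 * 9 ^ k * x ^ 9.
Proof.
  intros Hx Hr.
  set (r := (25 / 9) ^ k * x ^ 16) in Hr.
  set (b := fun i => INR (odd_sq (S i)) ^ k * x ^ odd_sq (S i)).
  assert (Hb : forall i, 0 <= b i) by (intros; apply odd_sq_term_nonneg; lra).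
  assert (Hratio : forall i, b (S i) <= r * b i).
  { intros i; unfold b, r.
    replace ((25 / 9) ^ k * x ^ 16 * (INR (odd_sq (S i)) ^ k * x ^ odd_sq (S i)))
      with ((25 / 9 * INR (odd_sq (S i))) ^ k * (x ^ 16 * x ^ odd_sq (S i)))
      by (rewrite Rpow_mult_distr; ring).
    apply Rmult_le_compat; [apply pow_le, pos_INR|apply pow_le; lra| |].
    - apply pow_incr; split; [apply pos_INR|apply odd_sq_ratio].
    - apply pow_odd_sq_ratio; lra. }
  assert (Hr0 : 0 <= r) by (unfold r; apply Rmult_le_pos; apply pow_le; lra).
  pose proof (sum_f_R0_ratio_le b r J ltac:(lra) Hb Hratio) as Hgeom.
  assert (Hb0 : b O = 9 ^ k * x ^ 9)
    by (unfold b; change (odd_sq 1) with 9%nat; rewrite INR_IZR_INZ; reflexivity).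
  pose proof (cond_pos_sum b J Hb).
  apply Rle_trans with (odd_sq_sum k x (S J)); [apply odd_sq_sum_growing; lra|].
  unfold odd_sq_sum; rewrite decomp_sum by lia; simpl pred; fold b.
  replace (INR (odd_sq 0) ^ k * x ^ odd_sq 0) with x
    by (unfold odd_sq; simpl; rewrite pow1; ring).
  nra.
Qed.

Lemma theta_mom_ge k s : 0 < s -> exp (- PI * s) <= theta_mom k s.
Proof.
  intros Hs; rewrite <- (odd_sq_sum_0 k (exp (- PI * s))) at 1.
  apply growing_ineq; [|apply odd_sq_sum_cv, Hs].
  apply odd_sq_sum_growing; left; apply exp_pos.
Qed.

Lemma theta_mom_pos k s : 0 < s -> 0 < theta_mom k s.
Proof. intros Hs; pose proof (theta_mom_ge k s Hs); pose proof (exp_pos (- PI * s)); lra. Qed.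

Lemma theta_mom_0_le_1 s : 0 < s -> theta_mom 0 s <= theta_mom 1 s.
Proof.
  intros Hs; eapply Rle_cv_lim; [|apply odd_sq_sum_cv, Hs|apply odd_sq_sum_cv, Hs].
  intros J; apply sum_growing; intros j; rewrite pow_O, pow_1, INR_odd_sq.
  pose proof (pos_INR j).
  pose proof (pow_le (exp (- PI * s)) (odd_sq j) (Rlt_le _ _ (exp_pos _))).
  nra.
Qed.

Lemma theta_mom_le k s :
  0 < s -> (25 / 9) ^ k * exp (- PI * s) ^ 16 <= 1 / 2 ->
  theta_mom k s <= exp (- PI * s) + 2 * 9 ^ k * exp (- PI * s) ^ 9.
Proof.
  intros Hs Hr; apply (Un_cv_le_const _ _ _ (odd_sq_sum_cv k s Hs)).
  intros J; apply odd_sq_sum_le; [apply exp_mPI_bounds, Hs|exact Hr].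
Qed.

(** * Monotonicity of [h] on [[1/4, +oo)] *)

Lemma exp_m8PI_le s :
  1 / 4 <= s -> exp (- PI * s) ^ 8 <= 1 / 300 /\ PI * s * exp (- PI * s) ^ 8 <= 1 / 300.
Proof.
  intros Hs; pose proof PI_gt_3; pose proof PI_4; pose proof exp_m2PI_le.
  rewrite exp_pow; replace (INR 8 * (- PI * s)) with (- (8 * PI * s)) by (simpl; ring).
  assert (exp (- (8 * PI * s)) <= exp (- (2 * PI))) by (apply exp_le; nra).
  split; [lra|].
  assert (4 * s <= exp (4 * s - 1)) by (pose proof (exp_ineq1_le (4 * s - 1)); lra).
  assert (exp (4 * s - 1) * exp (- (8 * PI * s)) <= exp (- (2 * PI)))
    by (rewrite <- exp_plus; apply exp_le; nra).
  pose proof (exp_pos (- (8 * PI * s))).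
  assert (4 * s * exp (- (8 * PI * s)) <= exp (- (2 * PI))) by nra.
  nra.
Qed.

Lemma theta_mom_le_large k s :
  1 / 4 <= s -> (k <= 2)%nat ->
  theta_mom k s <= exp (- PI * s) * (1 + 2 * 9 ^ k * exp (- PI * s) ^ 8).
Proof.
  intros Hs Hk; assert (Hs0 : 0 < s) by lra.
  destruct (exp_m8PI_le s Hs) as [Hy _].
  assert (Hy0 : 0 <= exp (- PI * s) ^ 8)
    by (apply pow_le; pose proof (exp_mPI_bounds s Hs0); lra).
  assert (Hk8 : (25 / 9) ^ k <= 8)
    by (apply Rle_trans with ((25 / 9) ^ 2); [apply Rle_pow; [lra|exact Hk]|simpl; lra]).
  pose proof (pow_le (25 / 9) k ltac:(lra)).
  eapply Rle_trans; [apply theta_mom_le; [exact Hs0|]|right; ring].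
  replace (exp (- PI * s) ^ 16) with ((exp (- PI * s) ^ 8) ^ 2) by ring.
  assert ((exp (- PI * s) ^ 8) ^ 2 <= 1 / 16) by (simpl; nra).
  nra.
Qed.

Definition theta_h_num (s : R) : R :=
  theta_mom 1 s * theta_mom 0 s
  - PI * s * (theta_mom 2 s * theta_mom 0 s - theta_mom 1 s ^ 2).

Lemma theta_h_num_pos s : 1 / 4 <= s -> 0 < theta_h_num s.
Proof.
  intros Hs; assert (Hs0 : 0 < s) by lra.
  destruct (exp_m8PI_le s Hs) as [Hy Hzy].
  pose proof (exp_mPI_bounds s Hs0); pose proof PI_gt_3.
  pose proof (theta_mom_ge 0 s Hs0); pose proof (theta_mom_ge 1 s Hs0);
    pose proof (theta_mom_ge 2 s Hs0).
  pose proof (theta_mom_le_large 0 s Hs ltac:(lia)) as HA.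
  pose proof (theta_mom_le_large 2 s Hs ltac:(lia)) as HC.
  unfold theta_h_num.
  set (x := exp (- PI * s)) in *; set (y := x ^ 8) in *.
  set (A := theta_mom 0 s) in *; set (B := theta_mom 1 s) in *;
    set (C := theta_mom 2 s) in *; set (z := PI * s) in *.
  replace (2 * 9 ^ 0 * y) with (2 * y) in HA by ring.
  replace (2 * 9 ^ 2 * y) with (162 * y) in HC by ring.
  assert (0 <= y) by (unfold y; apply pow_le; lra).
  assert (0 <= z) by (unfold z; nra).
  assert (x * x <= B * A) by (apply Rmult_le_compat; lra).
  assert (x * x <= B ^ 2) by nra.
  assert (C * A <= x * (1 + 162 * y) * (x * (1 + 2 * y))) by (apply Rmult_le_compat; lra).
  assert (Hgap : C * A - B ^ 2 <= x * x * (166 * y)) by nra.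
  assert (z * (C * A - B ^ 2) <= z * (x * x * (166 * y))) by (apply Rmult_le_compat_l; assumption).
  nra.
Qed.

Definition theta_h (s : R) : R := - PI * s * theta_mom 1 s / theta_mom 0 s.

Lemma theta_h_derive s :
  0 < s -> derivable_pt_lim theta_h s (- PI * theta_h_num s / theta_mom 0 s ^ 2).
Proof.
  intros Hs; apply is_derive_Reals.
  assert (Hlin : is_derive (fun t => - PI * t) s (- PI)) by (auto_derive; auto; ring).
  assert (Hne : theta_mom 0 s <> 0) by apply Rgt_not_eq, theta_mom_pos, Hs.
  pose proof (is_derive_div _ _ s _ _
    (is_derive_mult _ _ s _ _ Hlin (is_derive_theta_mom 1 s Hs) Rmult_comm)
    (is_derive_theta_mom 0 s Hs) Hne) as H.
  unfold mult, plus in H; simpl in H.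
  unfold theta_h; replace (- PI * theta_h_num s / theta_mom 0 s ^ 2) with
    (((- PI * theta_mom 1 s + - PI * s * (- PI * theta_mom 2 s)) * theta_mom 0 s
      - - PI * s * theta_mom 1 s * (- PI * theta_mom 1 s))
     / (theta_mom 0 s * (theta_mom 0 s * 1))) by (unfold theta_h_num; field; exact Hne).
  exact H.
Qed.

Lemma theta_h_decreasing s t : 1 / 4 <= s -> s < t -> theta_h t < theta_h s.
Proof.
  intros Hs Hst.
  destruct (MVT_cor2 theta_h (fun u => - PI * theta_h_num u / theta_mom 0 u ^ 2) s t Hst)
    as [c [Hmvt Hc]]; [intros c Hc; apply theta_h_derive; lra|].
  pose proof (theta_h_num_pos c ltac:(lra)); pose proof (theta_mom_pos 0 c ltac:(lra)).
  assert (0 < PI * theta_h_num c / theta_mom 0 c ^ 2)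
    by (apply Rdiv_lt_0_compat; [apply Rmult_lt_0_compat; [apply PI_RGT_0|]|apply pow_lt];
        assumption).
  replace (- PI * theta_h_num c / theta_mom 0 c ^ 2)
    with (- (PI * theta_h_num c / theta_mom 0 c ^ 2)) in Hmvt by (field; lra).
  nra.
Qed.

(** * The bound for [s <= 1/4] *)

Definition half_theta_term (s : R) (n : nat) : R :=
  exp (- PI * s * ((2 * INR n + 1) / 2) ^ 2).

(* With [t = 3 PI s m / 4]: [s m exp (- PI s m) = 4/(3 PI) * t exp (-t) * exp (- PI s m / 4)]. *)
Lemma odd_sq_term_le s j :
  INR (odd_sq j) ^ 1 * exp (- PI * s) ^ odd_sq j * s
  <= 4 * exp (- 1) / (3 * PI) * half_theta_term s j.
Proof.
  pose proof PI_RGT_0.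
  rewrite pow_1, exp_pow_odd_sq, INR_odd_sq; unfold half_theta_term.
  set (m := (2 * INR j + 1) ^ 2).
  set (t := 3 * PI * (s * m) / 4).
  replace (- PI * s * ((2 * INR j + 1) / 2) ^ 2) with (- PI * s * m / 4) by (unfold m; field).
  replace (exp (- PI * m * s)) with (exp (- t) * exp (- PI * s * m / 4))
    by (rewrite <- exp_plus; f_equal; unfold t; field).
  replace (m * (exp (- t) * exp (- PI * s * m / 4)) * s)
    with (4 / (3 * PI) * (t * exp (- t)) * exp (- PI * s * m / 4))
    by (unfold t; field; lra).
  replace (4 * exp (- 1) / (3 * PI)) with (4 / (3 * PI) * exp (- 1)) by (field; lra).
  apply Rmult_le_compat_r; [left; apply exp_pos|].
  apply Rmult_le_compat_l; [left; apply Rdiv_lt_0_compat; lra|apply mul_exp_neg_le].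
Qed.

Lemma half_theta_term_le s i : 0 < s ->
  half_theta_term s (2 * i + 1) <= exp (- PI * s) ^ odd_sq i /\
  half_theta_term s (2 * i + 2) <= exp (- PI * s) ^ odd_sq i.
Proof.
  intros Hs; rewrite exp_pow_odd_sq; unfold half_theta_term.
  rewrite !plus_INR, !mult_INR; simpl (INR 1); simpl (INR 2).
  pose proof (pos_INR i); pose proof PI_RGT_0.
  assert (0 <= PI * s * (INR i + 5 / 4)) by (apply Rmult_le_pos; nra).
  split; apply exp_le; nra.
Qed.

Lemma sum_half_theta_term_le s J : 0 < s ->
  sum_f_R0 (half_theta_term s) (2 * J + 2)
  <= half_theta_term s 0 + 2 * odd_sq_sum 0 (exp (- PI * s)) J.
Proof.
  intros Hs; unfold odd_sq_sum; induction J as [|J IH].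
  - destruct (half_theta_term_le s 0 Hs) as [H1 H2]; cbn [Nat.mul Nat.add] in H1, H2.
    change (half_theta_term s 0 + half_theta_term s 1 + half_theta_term s 2
            <= half_theta_term s 0 + 2 * (INR (odd_sq 0) ^ 0 * exp (- PI * s) ^ odd_sq 0)).
    rewrite pow_O, Rmult_1_l; lra.
  - replace (2 * S J + 2)%nat with (S (S (2 * J + 2))) by lia.
    rewrite !tech5, pow_O, Rmult_1_l.
    destruct (half_theta_term_le s (S J) Hs).
    replace (S (2 * J + 2)) with (2 * S J + 1)%nat by lia.
    replace (S (2 * S J + 1)) with (2 * S J + 2)%nat by lia.
    lra.
Qed.

Lemma s_odd_sq_sum_1_le s J : 0 < s ->
  s * odd_sq_sum 1 (exp (- PI * s)) J
  <= 4 * exp (- 1) / (3 * PI)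
     * (half_theta_term s 0 + 2 * odd_sq_sum 0 (exp (- PI * s)) J).
Proof.
  intros Hs; set (c := 4 * exp (- 1) / (3 * PI)).
  assert (Hc : 0 <= c) by (unfold c; pose proof (exp_pos (- 1)); pose proof PI_RGT_0;
                          apply Rlt_le, Rdiv_lt_0_compat; lra).
  apply Rle_trans with (c * sum_f_R0 (half_theta_term s) (2 * J + 2));
    [|apply Rmult_le_compat_l, sum_half_theta_term_le; assumption].
  apply Rle_trans with (c * sum_f_R0 (half_theta_term s) J).
  - unfold odd_sq_sum; rewrite !scal_sum; apply sum_growing; intros j.
    rewrite (Rmult_comm _ c); apply odd_sq_term_le.
  - apply Rmult_le_compat_l; [exact Hc|].
    apply tech9; [apply sum_f_R0_growing; intros; left; apply exp_pos|lia].
Qed.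

Lemma s_theta_mom_1_le s : 0 < s -> s <= 1 / 4 -> s * theta_mom 1 s <= theta_mom 0 s.
Proof.
  intros Hs Hs4; set (c := 4 * exp (- 1) / (3 * PI)).
  pose proof PI_gt_3; pose proof PI_4; destruct exp_m1_bounds.
  assert (Hc : 0 <= c <= 1 / 6)
    by (unfold c; split; [apply Rlt_le, Rdiv_lt_0_compat; lra|
                          apply (Rmult_le_reg_r (3 * PI)); [lra|field_simplify; [nra|lra]]]).
  assert (Hhalf0 : half_theta_term s 0 <= 1)
    by (unfold half_theta_term; rewrite <- exp_0 at 2; apply exp_le;
        replace ((2 * INR 0 + 1) / 2) with (1 / 2) by (simpl; field); nra).
  assert (Hlim : s * theta_mom 1 s <= c * (1 + 2 * theta_mom 0 s)).
  { apply (Rle_cv_lim (Un := fun J => s * odd_sq_sum 1 (exp (- PI * s)) J)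
                      (Vn := fun J => c * (1 + 2 * odd_sq_sum 0 (exp (- PI * s)) J))).
    - intros J; eapply Rle_trans; [apply s_odd_sq_sum_1_le, Hs|].
      apply Rmult_le_compat_l; lra.
    - apply (CV_mult (fun _ => s)); [apply Un_cv_const|apply odd_sq_sum_cv, Hs].
    - apply (CV_mult (fun _ => c)); [apply Un_cv_const|].
      apply (CV_plus (fun _ => 1)); [apply Un_cv_const|].
      apply (CV_mult (fun _ => 2)); [apply Un_cv_const|apply odd_sq_sum_cv, Hs]. }
  assert (1 <= 3 * theta_mom 0 s).
  { pose proof (theta_mom_ge 0 s Hs).
    assert (exp (- 1) <= exp (- PI * s)) by (apply exp_le; nra); lra. }
  nra.
Qed.

Lemma theta_h_ge_h1 s : 0 < s -> s <= 1 / 4 -> theta_h 1 <= theta_h s.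
Proof.
  intros Hs Hs4; unfold theta_h.
  pose proof (s_theta_mom_1_le s Hs Hs4); pose proof (theta_mom_0_le_1 1 ltac:(lra)).
  pose proof (theta_mom_pos 0 s Hs); pose proof (theta_mom_pos 0 1 ltac:(lra)).
  pose proof PI_RGT_0.
  assert (s * theta_mom 1 s / theta_mom 0 s <= 1)
    by (apply (Rmult_le_reg_r (theta_mom 0 s)); [lra|field_simplify; lra]).
  assert (1 <= theta_mom 1 1 / theta_mom 0 1)
    by (apply (Rmult_le_reg_r (theta_mom 0 1)); [lra|field_simplify; lra]).
  replace (- PI * 1 * theta_mom 1 1 / theta_mom 0 1)
    with (- PI * (theta_mom 1 1 / theta_mom 0 1)) by (field; lra).
  replace (- PI * s * theta_mom 1 s / theta_mom 0 s)
    with (- PI * (s * theta_mom 1 s / theta_mom 0 s)) by (field; lra).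
  nra.
Qed.

Theorem mainTheorem15 :
  (exists d : R -> R, forall s, 0 < s -> derivable_pt_lim theta_o s (d s)) /\
  (forall d : R -> R,
     (forall s, 0 < s -> derivable_pt_lim theta_o s (d s)) ->
     let h := fun s => s * d s / theta_o s in
     (forall s t, 1 / 4 <= s -> s < t -> h t < h s) /\
     (forall s, 0 < s -> s <= 1 / 4 -> h s >= d 1 / theta_o 1)).
Proof.
  split; [exists (fun s => -2 * PI * theta_mom 1 s); exact theta_o_derive|].
  intros d Hd h.
  assert (Hh : forall s, 0 < s -> h s = theta_h s).
  { intros s Hs; unfold h, theta_h.
    rewrite (uniqueness_limite _ _ _ _ (Hd s Hs) (theta_o_derive s Hs)), theta_o_eq by exact Hs.
    field; apply Rgt_not_eq, theta_mom_pos, Hs. }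
  split.
  - intros s t Hs Hst; rewrite !Hh by lra; apply theta_h_decreasing; assumption.
  - intros s Hs Hs4; replace (d 1 / theta_o 1) with (h 1) by (unfold h; unfold Rdiv; ring).
    rewrite !Hh by lra; apply Rle_ge, theta_h_ge_h1; assumption.
Qed.
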